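(* Let $\Delta$ be a finite, flag, simply connected simplicial complex, with $\mathcal{P}_H$, $q$, $T$, $p_n$, $L$ and $\Phi_n$ as in the context, and let $K$ be a constant such that $\mathrm{Area}_{\mathcal{P}_H}\big(p_n(q,\iota e)\,e^n\,p_n(\tau e,q)\big)\le K|n|^2$ for all $e\in\mathrm{Edge}(\Delta)$ and $n\in\mathbb{Z}$. Let $e\cdot f\cdot g$ be a combinatorial 1-cycle in $\Delta$. Then for every $n\in\mathbb{Z}$, $\mathrm{Area}_{\mathcal{P}_H}\big(\Phi_n(e^{-1}f^{-1}g^{-1})\big)\le(3K+4)|n|^2+(6L+6)|n|+5$.
   Context: $\mathrm{Edge}(\Delta)$ is the set of directed edges of $\Delta$; for $e$ in it, $\iota e$, $\tau e$ are its initial and terminal vertices and $\overline{e}$ is the reversed edge. $e_1\cdot\ldots\cdot e_l$ is a combinatorial path if $\tau e_i=\iota e_{i+1}$, and a combinatorial 1-cycle if also $\tau e_l=\iota e_1$. $\mathcal{P}_H=\langle\mathrm{Edge}(\Delta)\mid\mathcal{R}_H\rangle$ where $\mathcal{R}_H$ consists of the words $e\overline{e}$ ($e\in\mathrm{Edge}(\Delta)$) and $efg$, $e^{-1}f^{-1}g^{-1}$ for every combinatorial 1-cycle $e\cdot f\cdot g$. $\mathrm{Area}_{\mathcal{P}_H}(w)$ is the least $m$ such that $w$ is freely equal to $\prod_{i=1}^m x_ir_ix_i^{-1}$ with $r_i\in\mathcal{R}_H^{\pm1}$. For a letter $e$ and $k\in\mathbb{Z}$, $e^k$ is the word of $k$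 copies of $e$ if $k\ge0$ and $|k|$ copies of $e^{-1}$ if $k<0$. Fix a vertex $q$ and a spanning tree $T$ of the 1-skeleton of $\Delta$; $p_n(u,v)=e_1^n\cdots e_l^n$ where $e_1\cdot\ldots\cdot e_l$ is the unique geodesic combinatorial path in $T$ from $u$ to $v$. $L$ is the maximum over vertices $u,v$ of their edge-path distance in $T$. $\Phi_n$ ($n\in\mathbb{Z}$) is the endomorphism of the free monoid on $\mathrm{Edge}(\Delta)^{\pm1}$ with $\Phi_n(e)=p_n(q,\iota e)\,e^{n+1}\,p_n(\tau e,q)$ and $\Phi_n(e^{-1})=\Phi_n(e)^{-1}$ (formal inverse word). *)

From HB Require Import structures.
From mathcomp Require Import all_boot all_order all_algebra.
From Stdlib Require Import Relations.
Set Implicit Arguments. Unset Strict Implicit. Unset Printing Implicit Defensive.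
Import Order.TTheory GRing.Theory Num.Theory.

(* A finite flag simplicial complex Delta is the clique complex of its
   1-skeleton, a finite simple graph (V, adj): adj symmetric, irreflexive.
   Its simplices are the cliques of adj. *)

Section Complex.
Variables (V : finType) (adj : rel V).

Definition Edge := {p : V * V | adj p.1 p.2}.
Definition iota_e (e : Edge) : V := (val e).1.
Definition tau_e (e : Edge) : V := (val e).2.

Definition cycle3 (e f g : Edge) : Prop :=
  [/\ tau_e e = iota_e f, tau_e f = iota_e g & tau_e g = iota_e e].

Inductive ep_move : seq V -> seq V -> Prop :=
| ep_back (p r : seq V) (a b : V) :
    adj a b -> ep_move (p ++ [:: a; b; a] ++ r) (p ++ [:: a] ++ r)
| ep_tri (p r : seq V) (a b c : V) :
    adj a b -> adj b c -> adj a c ->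
    ep_move (p ++ [:: a; b; c] ++ r) (p ++ [:: a; c] ++ r).

Definition ep_equiv := clos_refl_sym_trans (seq V) ep_move.

Definition simply_connected : Prop :=
  (forall u v : V, connect adj u v) /\
  (forall (v : V) (s : seq V), path adj v s -> last v s = v ->
     ep_equiv (v :: s) [:: v]).

Definition acyclic (T : rel V) : Prop :=
  forall (v : V) (s : seq V),
    path T v s -> uniq (v :: s) -> 2 <= size s -> ~~ T (last v s) v.

Definition spanning_tree (T : rel V) : Prop :=
  [/\ (forall u v : V, T u v -> adj u v), (forall u v : V, T u v = T v u), (forall u v : V, connect T u v) & acyclic T].

Fixpoint cpath (u : V) (es : seq Edge) (v : V) : bool :=
  match es with
  | [::] => u == v
  | e :: es' => (iota_e e == u) && cpath (tau_e e) es' v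
  end.

Definition cpath_in (T : rel V) (u : V) (es : seq Edge) (v : V) : bool :=
  cpath u es v && all (fun e => T (iota_e e) (tau_e e)) es.

Definition tree_geodesics (T : rel V) (gp : V -> V -> seq Edge) : Prop :=
  forall u v : V, cpath_in T u (gp u v) v /\
    (forall es, cpath_in T u es v -> size (gp u v) <= size es).

Definition Tdiam (gp : V -> V -> seq Edge) : nat :=
  \max_(u : V) \max_(v : V) size (gp u v).

(* a letter (e, false) is e, (e, true) is e^{-1} *)
Definition word := seq (Edge * bool).
Definition winv (w : word) : word := rev (map (fun x => (x.1, ~~ x.2)) w).

Inductive free_step : word -> word -> Prop :=
| fs_cancel (w1 w2 : word) (e : Edge) (b : bool) :
    free_step (w1 ++ [:: (e, b); (e, ~~ b)] ++ w2) (w1 ++ w2).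

Definition freely_eq := clos_refl_sym_trans word free_step.

Definition relator (r : word) : Prop :=
  (exists e f : Edge, val f = ((val e).2, (val e).1) /\
      r = [:: (e, false); (f, false)]) \/
  (exists e f g : Edge, cycle3 e f g /\
      (r = [:: (e, false); (f, false); (g, false)] \/
       r = [:: (e, true); (f, true); (g, true)])).

Definition relator_pm (r : word) : Prop := relator r \/ relator (winv r).

Definition area_rep (w : word) (m : nat) : Prop :=
  exists xs : seq (word * word),
    [/\ size xs = m, (forall xr, xr \in xs -> relator_pm xr.2) &
        freely_eq w (flatten [seq xr.1 ++ xr.2 ++ winv xr.1 | xr <- xs])].

(* Area_{P_H}(w) <= B  (Area = least such m; +oo if none exists) *)
Definition Area_le (R : realFieldType) (w : word) (B : R) : Prop :=
  exists m : nat, area_rep w m /\ (m%:R <= B)%R.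

Definition lpow (e : Edge) (k : int) : word :=
  match k with
  | Posz m => nseq m (e, false)
  | Negz m => nseq m.+1 (e, true)
  end.

Definition pn_of (es : seq Edge) (n : int) : word :=
  flatten [seq lpow e n | e <- es].

Definition Phi_edge (gp : V -> V -> seq Edge) (q : V) (n : int) (e : Edge) : word :=
  pn_of (gp q (iota_e e)) n ++ lpow e (n + 1)%R ++ pn_of (gp (tau_e e) q) n.

Definition Phi_letter gp q n (x : Edge * bool) : word :=
  if x.2 then winv (Phi_edge gp q n x.1) else Phi_edge gp q n x.1.

Definition Phi gp q n (w : word) : word := flatten [seq Phi_letter gp q n x | x <- w].

End Complex.

From HB Require Import structures.
From mathcomp Require Import all_boot all_order all_algebra.
From Stdlib Require Import Relations.
From mathcomp Require Import zify lra.
Import Order.TTheory GRing.Theory Num.Theory.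
Set Implicit Arguments. Unset Strict Implicit. Unset Printing Implicit Defensive.

(* Expanding Phi_n(e^-1 f^-1 g^-1) and rotating it cyclically, the tree paths
   meet in three junctions p_n(iota a, q) p_n(q, tau a), a = e, f, g.  By the
   hypothesis applied to the reversed edge of a, each junction equals a^n at
   cost K|n|^2 + |n| (|n| backtrack relators turn the reversed edge into a^-1).
   What remains is g^(n+1) e^n f^(n+1) g^n e^(n+1) f^n, which has area at most
   4|n|^2 + 6|n| + 1: in P_H the edges of a triangle pairwise commute at cost 2
   per letter swap, and a^k b^k = c^-k at cost k^2 whenever abc is a relator.
   Finally L >= 1 absorbs the linear terms. *)

Section Edges.
Variables (V : finType) (adj : rel V).

Definition rev_edge (adj_sym : forall u v, adj u v = adj v u) (e : Edge adj) : Edge adj :=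
  exist _ ((val e).2, (val e).1) (etrans (adj_sym _ _) (valP e)).

Lemma Tdiam_gt0 (T : rel V) (gp : V -> V -> seq (Edge adj)) :
  irreflexive adj -> tree_geodesics T gp -> Edge adj -> (0 < Tdiam gp)%N.
Proof.
move=> adj_irr hgp e.
apply: leq_trans (leq_bigmax (iota_e e)); apply: leq_trans (leq_bigmax (tau_e e)).
have [/andP[+ _] _] := hgp (iota_e e) (tau_e e).
case: (gp _ _) => //= /eqP iota_tau.
by have := valP e; rewrite -/(iota_e e) -/(tau_e e) -iota_tau adj_irr.
Qed.

End Edges.

Section FreeWords.
Variables (V : finType) (adj : rel V).
Local Notation word := (word adj).
Local Notation letter := (Edge adj * bool)%type.

Definition linv (x : letter) : letter := (x.1, ~~ x.2).

Lemma linvK : involutive linv.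
Proof. by case=> a b; rewrite /linv /= negbK. Qed.

Lemma winv_cat (a b : word) : winv (a ++ b) = winv b ++ winv a.
Proof. by rewrite /winv map_cat rev_cat. Qed.

Lemma winvK : involutive (@winv _ adj).
Proof. by move=> a; rewrite /winv map_rev revK -map_comp map_id_in // => x _; apply: linvK. Qed.

Lemma winv_nseq k (x : letter) : winv (nseq k x) = nseq k (linv x).
Proof. by rewrite /winv map_nseq rev_nseq. Qed.

Lemma freely_eq_ctx (u v a b : word) :
  freely_eq a b -> freely_eq (u ++ a ++ v) (u ++ b ++ v).
Proof.
elim=> [{}a {}b [w1 w2 e s]|{}a|{}a {}b _ IH|{}a {}b c _ IH1 _ IH2].
- apply: rst_step; have := fs_cancel (u ++ w1) (w2 ++ v) e s.
  by rewrite -!catA.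
- exact: rst_refl.
- exact: rst_sym.
- exact: rst_trans IH2.
Qed.

Lemma freely_eq_cat (a b c d : word) :
  freely_eq a b -> freely_eq c d -> freely_eq (a ++ c) (b ++ d).
Proof.
move=> Hab Hcd; apply: (rst_trans _ _ _ (b ++ c)).
  by have := freely_eq_ctx [::] c Hab.
by have := freely_eq_ctx b [::] Hcd; rewrite !cats0.
Qed.

Lemma freely_eq_cancel1 (x : letter) : freely_eq [:: x; linv x] [::].
Proof. by case: x => e s; apply: rst_step; apply: (fs_cancel [::] [::]). Qed.

Lemma freely_eq_cancel (a : word) : freely_eq (a ++ winv a) [::].
Proof.
elim: a => [|x a IH] /=; first exact: rst_refl.
have -> : winv (x :: a) = winv a ++ [:: linv x] by rewrite -cat1s winv_cat.
apply: rst_trans (freely_eq_cancel1 x).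
by have := freely_eq_ctx [:: x] [:: linv x] IH; rewrite /= -catA.
Qed.

Lemma freely_eq_cancelV (a : word) : freely_eq (winv a ++ a) [::].
Proof. by rewrite -{2}(winvK a); apply: freely_eq_cancel. Qed.

Lemma freely_eq_winv (a b : word) : freely_eq a b -> freely_eq (winv a) (winv b).
Proof.
elim=> [{}a {}b [w1 w2 e s]|{}a|{}a {}b _ IH|{}a {}b c _ IH1 _ IH2].
- apply: rst_step; rewrite !winv_cat -catA.
  have -> : winv [:: (e, s); (e, ~~ s)] = [:: (e, s); (e, ~~ s)] by rewrite /winv /= negbK.
  exact: fs_cancel.
- exact: rst_refl.
- exact: rst_sym.
- exact: rst_trans IH2.
Qed.

Definition conj_prod (xs : seq (word * word)) : word :=
  flatten [seq xr.1 ++ xr.2 ++ winv xr.1 | xr <- xs].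

Lemma area_rep_free (a b : word) m : freely_eq a b -> area_rep a m -> area_rep b m.
Proof.
by move=> Hab [xs [sz rel fe]]; exists xs; split=> //; apply: rst_trans fe; apply: rst_sym.
Qed.

Lemma area_rep_cat (a b : word) m1 m2 :
  area_rep a m1 -> area_rep b m2 -> area_rep (a ++ b) (m1 + m2).
Proof.
move=> [xs [<- rel1 fe1]] [ys [<- rel2 fe2]]; exists (xs ++ ys); split.
- by rewrite size_cat.
- by move=> xr; rewrite mem_cat => /orP[]; [apply: rel1 | apply: rel2].
- by rewrite map_cat flatten_cat; apply: freely_eq_cat.
Qed.

Lemma conj_prod_conj (u : word) xs :
  freely_eq (u ++ conj_prod xs ++ winv u) (conj_prod [seq (u ++ xr.1, xr.2) | xr <- xs]).
Proof.
elim: xs => [|[p r] xs IH] /=; first exact: freely_eq_cancel.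
rewrite /conj_prod /= -/(conj_prod _) -/(conj_prod xs) winv_cat -!catA.
apply: (rst_trans _ _ _ ((u ++ p ++ r ++ winv p ++ winv u) ++ (u ++ conj_prod xs ++ winv u))).
  have := freely_eq_ctx (u ++ p ++ r ++ winv p) (conj_prod xs ++ winv u)
            (rst_sym _ _ _ _ (freely_eq_cancelV u)).
  by rewrite -!catA.
have := freely_eq_ctx (u ++ p ++ r ++ winv p ++ winv u) [::] IH.
by rewrite !cats0 -!catA.
Qed.

Lemma area_rep_conj (u a : word) m : area_rep a m -> area_rep (u ++ a ++ winv u) m.
Proof.
move=> [xs [<- rel fe]]; exists [seq (u ++ xr.1, xr.2) | xr <- xs]; split.
- by rewrite size_map.
- by move=> xr /mapP[yr /rel ? ->].
- apply: rst_trans (conj_prod_conj u xs).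
  exact: freely_eq_ctx.
Qed.

Lemma conj_prod_winv xs :
  winv (conj_prod xs) = conj_prod (rev [seq (xr.1, winv xr.2) | xr <- xs]).
Proof.
elim: xs => [|[p r] xs IH] //=.
rewrite /conj_prod /= -/(conj_prod xs) winv_cat IH rev_cons -cats1 map_cat flatten_cat /=.
by rewrite cats0 !winv_cat winvK !catA.
Qed.

Lemma area_rep_winv (a : word) m : area_rep a m -> area_rep (winv a) m.
Proof.
move=> [xs [<- rel fe]]; exists (rev [seq (xr.1, winv xr.2) | xr <- xs]); split.
- by rewrite size_rev size_map.
- move=> xr; rewrite mem_rev => /mapP[yr /rel [r_rel | r_rel] ->] /=.
    by right; rewrite winvK.
  by left.
- by rewrite -[flatten _]/(conj_prod _) -conj_prod_winv; apply: freely_eq_winv.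
Qed.

(* [b ++ a] is freely equal to the conjugate of [a ++ b] by [winv a]. *)
Lemma area_rep_rot (a b : word) m : area_rep (a ++ b) m -> area_rep (b ++ a) m.
Proof.
move=> /(area_rep_conj (winv a)); apply: area_rep_free.
rewrite winvK catA; have := freely_eq_ctx [::] (b ++ a) (freely_eq_cancelV a).
by rewrite /= -!catA.
Qed.

(* [a = b] in P_H, with [a b^-1] of area at most [k]. *)
Definition area_eq (a b : word) (k : nat) : Prop :=
  exists2 m, (m <= k)%N & area_rep (a ++ winv b) m.

Lemma area_eq0P (w : word) k : area_eq w [::] k <-> exists2 m, (m <= k)%N & area_rep w m.
Proof. by rewrite /area_eq cats0. Qed.

Lemma area_eq_free (a b : word) : freely_eq a b -> area_eq a b 0.
Proof.
move=> Hab; exists 0%N => //; exists [::]; split=> //.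
by apply: rst_trans (freely_eq_cancel b); apply: freely_eq_cat (rst_refl _ _ _).
Qed.

Lemma area_eq_refl (a : word) : area_eq a a 0.
Proof. exact/area_eq_free/rst_refl. Qed.

Lemma area_eq_le (a b : word) k k' : (k <= k')%N -> area_eq a b k -> area_eq a b k'.
Proof. by move=> le_kk' [m le_mk A]; exists m => //; apply: leq_trans le_kk'. Qed.

Lemma area_eq_trans (a b c : word) k1 k2 :
  area_eq a b k1 -> area_eq b c k2 -> area_eq a c (k1 + k2).
Proof.
move=> [m1 le1 A1] [m2 le2 A2]; exists (m1 + m2)%N; first exact: leq_add.
apply: area_rep_free (area_rep_cat A1 A2).
by have := freely_eq_ctx a (winv c) (freely_eq_cancelV b); rewrite !catA.
Qed.

Lemma area_eq_sym (a b : word) k : area_eq a b k -> area_eq b a k.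
Proof. by move=> [m le A]; exists m => //; have := area_rep_winv A; rewrite winv_cat winvK. Qed.

Lemma area_eq_ctx (u v a b : word) k :
  area_eq a b k -> area_eq (u ++ a ++ v) (u ++ b ++ v) k.
Proof.
move=> [m le A]; exists m => //; apply: area_rep_free (area_rep_conj u A).
rewrite !winv_cat.
have := freely_eq_ctx (u ++ a) (winv b ++ winv u) (rst_sym _ _ _ _ (freely_eq_cancel v)).
by rewrite /= !catA.
Qed.

Lemma area_eq_catl (u a b : word) k : area_eq a b k -> area_eq (u ++ a) (u ++ b) k.
Proof. by move=> /(area_eq_ctx u [::]); rewrite !cats0. Qed.

Lemma area_eq_catr (v a b : word) k : area_eq a b k -> area_eq (a ++ v) (b ++ v) k.
Proof. exact: area_eq_ctx [::] v a b k. Qed.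

Lemma area_eq_relator (a b : word) : relator_pm (a ++ winv b) -> area_eq a b 1.
Proof.
move=> r_rel; exists 1%N => //; exists [:: ([::], a ++ winv b)]; split=> //.
- by move=> xr; rewrite inE => /eqP ->.
- by rewrite /= !cats0; apply: rst_refl.
Qed.

Lemma area_eq_rot (a b : word) k : area_eq (a ++ b) [::] k -> area_eq (b ++ a) [::] k.
Proof. by rewrite !area_eq0P => -[m le /area_rep_rot]; exists m. Qed.

Lemma area_eq_winv (a b : word) k : area_eq a b k -> area_eq (winv a) (winv b) k.
Proof.
move=> [m le /area_rep_winv]; rewrite winv_cat winvK => /area_rep_rot A.
by exists m; rewrite ?winvK.
Qed.

Lemma area_eq_nseq (x y : letter) j k :
  area_eq [:: x] [:: y] k -> area_eq (nseq j x) (nseq j y) (j * k).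
Proof.
move=> Exy; elim: j => [|j IH]; first exact: area_eq_refl.
rewrite mulSn; apply: (area_eq_trans (b := y :: nseq j x)).
  by have := area_eq_catr (nseq j x) Exy.
by have := area_eq_catl [:: y] IH.
Qed.

Lemma area_eq_swap_nseq (x y : letter) i j k :
  area_eq [:: x; y] [:: y; x] k ->
  area_eq (nseq i x ++ nseq j y) (nseq j y ++ nseq i x) (i * j * k).
Proof.
move=> Cxy.
have swap1 j' : area_eq (x :: nseq j' y) (nseq j' y ++ [:: x]) (j' * k).
  elim: j' => [|j' IH]; first exact: area_eq_refl.
  rewrite mulSn; apply: (area_eq_trans (b := y :: x :: nseq j' y)).
    by have := area_eq_catr (nseq j' y) Cxy.
  by have := area_eq_catl [:: y] IH.
elim: i => [|i IH]; first by rewrite cats0; apply: area_eq_refl.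
rewrite [(i.+1 * j)%N]mulSn mulnDl addnC.
apply: (area_eq_trans (b := x :: (nseq j y ++ nseq i x))).
  by have := area_eq_catl [:: x] IH.
by have := area_eq_catr (nseq i x) (swap1 j); rewrite -catA.
Qed.

Lemma area_eq_commute_linvr (x y : letter) k :
  area_eq [:: x; y] [:: y; x] k -> area_eq [:: x; linv y] [:: linv y; x] k.
Proof.
move=> Cxy; have -> : k = (0 + (k + 0))%N by rewrite addn0.
apply: (area_eq_trans (b := [:: linv y; y; x; linv y])).
  apply/area_eq_free/rst_sym.
  by have := freely_eq_ctx [::] [:: x; linv y] (freely_eq_cancel1 (linv y)); rewrite linvK.
apply: (area_eq_trans (b := [:: linv y; x; y; linv y])).
  by have := area_eq_ctx [:: linv y] [:: linv y] (area_eq_sym Cxy).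
apply: area_eq_free.
by have := freely_eq_ctx [:: linv y; x] [::] (freely_eq_cancel1 y); rewrite !cats0.
Qed.

Lemma area_eq_commute_linvl (x y : letter) k :
  area_eq [:: x; y] [:: y; x] k -> area_eq [:: linv x; y] [:: y; linv x] k.
Proof. by move=> /area_eq_sym/area_eq_commute_linvr/area_eq_sym. Qed.

(* x^(k+1) y^(k+1) = x z^k y = x y z^k = z^(k+1), at cost k^2 + 2k + 1. *)
Lemma area_eq_nseq_mul (x y z : letter) k :
  area_eq [:: x; y] [:: z] 1 -> area_eq [:: z; y] [:: y; z] 2 ->
  area_eq (nseq k x ++ nseq k y) (nseq k z) (k * k).
Proof.
move=> Mxy Czy; elim: k => [|k IH]; first exact: area_eq_refl.
have -> : (k.+1 * k.+1 = k * k + (k * 1 * 2 + 1))%N by rewrite mulnS mulSn; lia.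
apply: (area_eq_trans (b := [:: x] ++ nseq k z ++ [:: y])).
  have -> : nseq k.+1 x ++ nseq k.+1 y = [:: x] ++ (nseq k x ++ nseq k y) ++ [:: y].
    by rewrite -{1}[k.+1]add1n -[k.+1]addn1 !nseqD -!catA.
  exact: area_eq_ctx.
apply: (area_eq_trans (b := [:: x] ++ [:: y] ++ nseq k z)).
  exact/area_eq_catl/(area_eq_swap_nseq k 1).
by have := area_eq_catr (nseq k z) Mxy.
Qed.

Lemma lpowE (a : Edge adj) (i : int) : lpow a i = nseq `|i|%N (a, (i < 0)%R).
Proof. by case: i. Qed.

Lemma lpowN (a : Edge adj) (i : int) : lpow a (- i)%R = winv (lpow a i).
Proof. by case: i => [[|k]|k] //; rewrite winv_nseq. Qed.

Lemma lpowS (a : Edge adj) (i : int) : freely_eq (lpow a (i + 1)%R) ((a, false) :: lpow a i).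
Proof.
case: i => k.
  have -> : (Posz k + 1 = Posz k.+1)%R by rewrite -addn1.
  exact: rst_refl.
have -> : (Negz k + 1 = - Posz k)%R by rewrite NegzE; lia.
rewrite lpowN /= winv_nseq; apply: rst_sym.
by have := freely_eq_ctx [::] (nseq k (a, true)) (freely_eq_cancel1 (a, false)).
Qed.

Lemma lpowS_divl (a : Edge adj) (i : int) :
  freely_eq (lpow a i ++ winv (lpow a (i + 1)%R)) [:: (a, true)].
Proof.
apply: (rst_trans _ _ _ (lpow a i ++ winv (lpow a i) ++ [:: (a, true)])).
  apply: freely_eq_cat (rst_refl _ _ _) _.
  by have := freely_eq_winv (lpowS a i); rewrite -cat1s winv_cat.
by have := freely_eq_ctx [::] [:: (a, true)] (freely_eq_cancel (lpow a i)); rewrite /= -catA.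
Qed.

Lemma lpowS_cancel (a : Edge adj) (i : int) :
  freely_eq ((a, true) :: lpow a (i + 1)%R) (lpow a i).
Proof.
apply: (rst_trans _ _ _ ((a, true) :: (a, false) :: lpow a i)).
  exact: freely_eq_cat [:: (a, true)] _ _ _ (rst_refl _ _ _) (lpowS a i).
by have := freely_eq_ctx [::] (lpow a i) (freely_eq_cancel1 (a, true)).
Qed.

Lemma area_eq_lpow_rev (e e' : Edge adj) (k : int) :
  val e' = ((val e).2, (val e).1) -> area_eq (lpow e' k) (winv (lpow e k)) `|k|%N.
Proof.
move=> val_e'; rewrite !lpowE winv_nseq.
apply: (area_eq_le _ (area_eq_nseq _ (k := 1) _)); first by rewrite muln1.
apply: area_eq_relator; rewrite /linv /=; case: (k < 0)%R; [right | left]; left.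
  by exists e, e'.
by exists e', e; split=> //; rewrite val_e'; case: (val e).
Qed.

Definition commute_edges (a b : Edge adj) : Prop :=
  forall s t, area_eq [:: (a, s); (b, t)] [:: (b, t); (a, s)] 2.

Lemma area_eq_lpow_swap (a b : Edge adj) i j : commute_edges a b ->
  area_eq (lpow a i ++ lpow b j) (lpow b j ++ lpow a i) (`|i| * `|j| * 2)%N.
Proof. by move=> Cab; rewrite !lpowE; apply: area_eq_swap_nseq. Qed.

Lemma commute_edges_sym (a b : Edge adj) : commute_edges a b -> commute_edges b a.
Proof. by move=> Cab s t; apply: area_eq_sym. Qed.

Lemma area_eq_lpow_mul (a b c : Edge adj) k :
  (forall s, area_eq [:: (a, s); (b, s)] [:: (c, ~~ s)] 1) -> commute_edges c b ->
  area_eq (lpow a k ++ lpow b k) (winv (lpow c k)) (`|k| * `|k|)%N.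
Proof.
move=> Mab Ccb; rewrite !lpowE winv_nseq.
by apply: area_eq_nseq_mul; [apply: Mab | apply: Ccb].
Qed.

Lemma cycle3_rot (a b c : Edge adj) : cycle3 a b c -> cycle3 b c a.
Proof. by case. Qed.

Lemma cycle3_mul (a b c : Edge adj) : cycle3 a b c ->
  forall s, area_eq [:: (a, s); (b, s)] [:: (c, ~~ s)] 1.
Proof.
move=> abc s; apply: area_eq_relator; left; right; exists a, b, c; split=> //.
by case: s; [right | left].
Qed.

Lemma cycle3_mul_rev (a b c : Edge adj) : cycle3 a b c ->
  forall s, area_eq [:: (c, s); (b, s)] [:: (a, ~~ s)] 1.
Proof.
move=> abc s; apply: area_eq_relator; right; right; exists a, b, c; split=> //.
by case: s; [left | right].
Qed.

Lemma cycle3_commute (a b c : Edge adj) : cycle3 a b c -> commute_edges a b.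
Proof.
move=> abc.
have Cab : area_eq [:: (a, false); (b, false)] [:: (b, false); (a, false)] 2.
  apply: (area_eq_trans (cycle3_mul abc false)).
  exact/area_eq_sym/(cycle3_mul_rev (cycle3_rot (cycle3_rot abc))).
case=> [] [].
- exact: (area_eq_commute_linvl (area_eq_commute_linvr Cab)).
- exact: (area_eq_commute_linvl Cab).
- exact: (area_eq_commute_linvr Cab).
- exact: Cab.
Qed.

Lemma cycle3_hexagon (e f g : Edge adj) (n : int) : cycle3 e f g ->
  area_eq (lpow g (n + 1)%R ++ lpow e n ++ lpow f (n + 1)%R ++ lpow g n ++ lpow e (n + 1)%R
           ++ lpow f n) [::] (4 * `|n| ^ 2 + 6 * `|n| + 1)%N.
Proof.
move=> efg; set m := (n + 1)%R.
have Cef := cycle3_commute efg.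
have Cge := cycle3_commute (cycle3_rot (cycle3_rot efg)).
have swap_ge : area_eq (lpow g m ++ lpow e n ++ lpow f m ++ lpow g n ++ lpow e m ++ lpow f n)
                  (lpow e n ++ lpow g m ++ lpow f m ++ lpow g n ++ lpow e m ++ lpow f n)
                  (`|m| * `|n| * 2).
  have := area_eq_lpow_swap m n Cge.
  by move/(area_eq_catr (lpow f m ++ lpow g n ++ lpow e m ++ lpow f n)); rewrite -!catA.
have mul_gf : area_eq (lpow e n ++ lpow g m ++ lpow f m ++ lpow g n ++ lpow e m ++ lpow f n)
                  (lpow e n ++ winv (lpow e m) ++ lpow g n ++ lpow e m ++ lpow f n) (`|m| * `|m|).
  have := area_eq_lpow_mul m (cycle3_mul_rev efg) Cef.
  by move/(area_eq_ctx (lpow e n) (lpow g n ++ lpow e m ++ lpow f n)); rewrite -!catA.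
have cancel_en : area_eq (lpow e n ++ winv (lpow e m) ++ lpow g n ++ lpow e m ++ lpow f n)
                  ((e, true) :: lpow g n ++ lpow e m ++ lpow f n) 0.
  apply/area_eq_free; rewrite catA -cat1s.
  exact: freely_eq_cat (lpowS_divl e n) (rst_refl _ _ _).
have swap_eg : area_eq ((e, true) :: lpow g n ++ lpow e m ++ lpow f n)
                  (lpow g n ++ (e, true) :: lpow e m ++ lpow f n) (1 * `|n| * 2).
  have := area_eq_catr (lpow e m ++ lpow f n) (area_eq_lpow_swap (-1)%R n (commute_edges_sym Cge)).
  by rewrite -!catA.
have cancel_em : area_eq (lpow g n ++ (e, true) :: lpow e m ++ lpow f n)
                  (lpow g n ++ lpow e n ++ lpow f n) 0.
  apply/area_eq_free/freely_eq_cat; first exact: rst_refl.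
  rewrite -cat1s catA; exact: freely_eq_cat (lpowS_cancel e n) (rst_refl _ _ _).
have mul_ge : area_eq (lpow g n ++ lpow e n ++ lpow f n) (winv (lpow f n) ++ lpow f n)
                      (`|n| * `|n|).
  rewrite catA; apply: area_eq_catr.
  exact: area_eq_lpow_mul n (cycle3_mul (cycle3_rot (cycle3_rot efg))) (commute_edges_sym Cef).
have cancel_f : area_eq (winv (lpow f n) ++ lpow f n) [::] 0.
  exact/area_eq_free/freely_eq_cancelV.
apply: area_eq_le (area_eq_trans swap_ge (area_eq_trans mul_gf (area_eq_trans cancel_en
         (area_eq_trans swap_eg (area_eq_trans cancel_em (area_eq_trans mul_ge cancel_f)))))).
have : (`|m| <= `|n| + 1)%N by rewrite /m; lia.
nia.
Qed.

Lemma area_eq_junction (e e' : Edge adj) (a b : word) (k : int) m :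
  val e' = ((val e).2, (val e).1) -> area_rep (a ++ lpow e' k ++ b) m ->
  area_eq (b ++ a) (lpow e k) (m + `|k|).
Proof.
rewrite catA => val_e' /area_rep_rot A.
have /area_eq0P[m' le_m' A'] : area_eq (b ++ a ++ winv (lpow e k)) [::] (`|k| + m).
  apply: (area_eq_trans (b := b ++ a ++ lpow e' k)).
    by rewrite catA [b ++ a ++ _]catA; apply/area_eq_catl/area_eq_sym/area_eq_lpow_rev.
  by apply/area_eq0P; exists m.
by exists m'; rewrite 1?addnC // -catA.
Qed.

End FreeWords.

Section PhiMap.
Variables (V : finType) (adj : rel V) (gp : V -> V -> seq (Edge adj)) (q : V) (n : int).
Local Notation P u v := (pn_of (gp u v) n).
Local Notation Phi := (Phi gp q n).

Lemma Phi_cat (a b : word adj) : Phi (a ++ b) = Phi a ++ Phi b.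
Proof. by rewrite /Phi map_cat flatten_cat. Qed.

Lemma Phi_winv (w : word adj) : Phi (winv w) = winv (Phi w).
Proof.
elim: w => [|x w IH] //.
rewrite -cat1s winv_cat Phi_cat IH Phi_cat winv_cat /Phi /= !cats0.
by case: x => e [] /=; rewrite ?winvK.
Qed.

Lemma Phi_cycle3_area_eq (e f g : Edge adj) cE cF cG : cycle3 e f g ->
  area_eq (P (iota_e e) q ++ P q (iota_e f)) (lpow e n) cE ->
  area_eq (P (iota_e f) q ++ P q (iota_e g)) (lpow f n) cF ->
  area_eq (P (iota_e g) q ++ P q (iota_e e)) (lpow g n) cG ->
  area_eq (Phi [:: (e, true); (f, true); (g, true)]) [::]
          (cE + cF + cG + (4 * `|n| ^ 2 + 6 * `|n| + 1)).
Proof.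
move=> efg JE JF JG; have [ef fg ge] := efg.
rewrite -[[:: _; _; _]]/(winv [:: (g, false); (f, false); (e, false)]) Phi_winv.
apply: (area_eq_winv (b := [::])); rewrite /Phi /Phi_letter /= cats0 /Phi_edge ef fg ge.
rewrite -!catA; apply: (area_eq_rot (b := P q (iota_e g))); rewrite -!catA.
set m := (n + 1)%R.
have TE := area_eq_ctx (lpow g m) (lpow f m ++ P (iota_e g) q ++ P q (iota_e e) ++ lpow e m
                                     ++ P (iota_e f) q ++ P q (iota_e g)) JE.
have TG := area_eq_ctx (lpow g m ++ lpow e n ++ lpow f m) (lpow e m ++ P (iota_e f) q
                                                            ++ P q (iota_e g)) JG.
have TF := area_eq_ctx (lpow g m ++ lpow e n ++ lpow f m ++ lpow g n ++ lpow e m) [::] JF.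
rewrite -!catA ?cats0 in TE TG TF.
apply: area_eq_le (area_eq_trans TE (area_eq_trans TG (area_eq_trans TF (cycle3_hexagon n efg)))).
lia.
Qed.

End PhiMap.

Local Open Scope ring_scope.

Theorem lemma4p8 (R : realFieldType) (V : finType) (adj : rel V)
  (adj_sym : forall u v : V, adj u v = adj v u) (adj_irr : irreflexive adj)
  (hsc : simply_connected adj)
  (q : V) (T : rel V) (hT : spanning_tree adj T)
  (gp : V -> V -> seq (Edge adj)) (hgp : tree_geodesics T gp)
  (K : R)
  (hK : forall (e : Edge adj) (n : int),
      Area_le (pn_of (gp q (iota_e e)) n ++ lpow e n ++ pn_of (gp (tau_e e) q) n)
              (K * ((absz n)%:R) ^+ 2))
  (e f g : Edge adj) (hefg : cycle3 e f g) :
  forall n : int,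
    Area_le (Phi gp q n [:: (e, true); (f, true); (g, true)])
      ((3%:R * K + 4%:R) * ((absz n)%:R) ^+ 2
       + (6%:R * (Tdiam gp)%:R + 6%:R) * (absz n)%:R + 5%:R).
Proof.
move=> n; set N := `|n|%N.
have L_gt0 := Tdiam_gt0 adj_irr hgp e.
have junction (a : Edge adj) : exists2 c : nat, c%:R <= K * N%:R ^+ 2 &
    area_eq (pn_of (gp (iota_e a) q) n ++ pn_of (gp q (tau_e a)) n) (lpow a n) (c + N).
  have [c [A le_c]] := hK (rev_edge adj_sym a) n.
  by exists c => //; apply: area_eq_junction A.
have [ef fg ge] := hefg.
have [cE leE JE] := junction e; have [cF leF JF] := junction f; have [cG leG JG] := junction g.
rewrite ef in JE; rewrite fg in JF; rewrite ge in JG.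
have /area_eq0P[m le_m A] := Phi_cycle3_area_eq hefg JE JF JG.
exists m; split => //.
have le_m' : (m <= cE + cF + cG + (4 * (N * N) + (6 * Tdiam gp + 6) * N + 5))%N by nia.
apply: le_trans (_ : (cE + cF + cG + (4 * (N * N) + (6 * Tdiam gp + 6) * N + 5))%N%:R <= _).
  by rewrite ler_nat.
rewrite !(natrD, natrM) expr2; rewrite expr2 in leE leF leG; lra.
Qed.
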